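(* Fix integers $1\le a_1<a_2$, and let $\mathcal{A}$ be an infinite set of primes $n>2a_2$. Let $\{\mathcal{B}_n\}_{n\in\mathcal{A}}$ be any sequence where each $\mathcal{B}_n$ is a real orthonormal basis of $\mathbb{R}^n$ consisting of eigenvectors of $A(C_n(a_1,a_2))$. Then there exist $p\in(0,1)$, a sequence of vertex subsets $S_n\subset\{0,\dots,n-1\}$ with $\lim_{n\to\infty}|S_n|/n=p$, and a sequence of eigenvectors $\varphi_n\in\mathcal{B}_n$, such that $\mu_{\varphi_n}(S_n)$ does not converge to $p$ as $n\to\infty$, $n\in\mathcal{A}$.
   Context: A circulant graph $C_n(a_1,a_2)$, with integers $1\le a_1<a_2\le n/2$, has vertex set $V=\{0,1,\dots,n-1\}$, and $i\sim j$ if and only if $i-j\equiv \pm a_1$ or $\pm a_2 \pmod n$; it is 4-regular. Its adjacency matrix $A(C_n(a_1,a_2))$ is the $n\times n$ matrix with $A_{ij}=1$ if $i\sim j$ and $0$ otherwise. For a unit vector $\psi\in\mathbb{R}^n$, $\mu_\psi(S)=\sum_{v\in S}|\psi(v)|^2$ for $S\subset V$. *)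

From HB Require Import structures.
From mathcomp Require Import all_boot all_order all_algebra.
From mathcomp Require Import reals.
Set Implicit Arguments. Unset Strict Implicit. Unset Printing Implicit Defensive.
Import Order.TTheory GRing.Theory Num.Theory.
Local Open Scope ring_scope.

Definition circ_adjb (n a1 a2 : nat) (i j : 'I_n) : bool :=
  let d := ((i + n - j) %% n)%N in
  [|| d == (a1 %% n)%N, d == ((n - a1) %% n)%N, d == (a2 %% n)%N | d == ((n - a2) %% n)%N].

Definition circ_adj (R : nzRingType) (n a1 a2 : nat) : 'M[R]_n :=
  \matrix_(i, j) (if circ_adjb a1 a2 i j then 1 else 0).

Definition mu (R : realType) (n : nat) (psi : 'cV[R]_n) (S : {set 'I_n}) : R :=
  \sum_(v in S) `|psi v ord0| ^+ 2.

Definition conv_along (R : realType) (A : pred nat) (x : nat -> R) (l : R) : Prop :=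
  forall eps : R, 0 < eps -> exists N : nat, forall n : nat, A n -> (N <= n)%N ->
    `|x n - l| < eps.

Definition infinite_nat (A : pred nat) : Prop :=
  forall N : nat, exists n : nat, (N <= n)%N /\ A n.

Definition orthonormal_eigenbasis (R : realType) (n : nat) (M B : 'M[R]_n) : Prop :=
  B^T *m B = 1%:M /\
  forall i : 'I_n, exists lam : R, M *m col i B = lam *: col i B.

From mathcomp Require Import all_boot all_order all_algebra reals.
From mathcomp Require Import zify ring lra.

(* Write N for the prime n and Q(f) for the Dirichlet energy
   sum_v (f(v+a1) - f(v))^2 + (f(v+a2) - f(v))^2, so that <f, A f> = 4 |f|^2 - Q(f).
   The test vector "distance to 0 minus distance to the antipode" has mean zero,
   energy O(a2^2 N) and squared norm at least N^3/1024.  Expanding it in the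
   eigenbasis gives a unit eigenvector phi, not orthogonal to it, with
   Q(phi) = 4 - lambda = O(a2^2 / N^2).  This phi has mean zero: constants are
   4-eigenvectors, so otherwise lambda = 4, Q(phi) = 0 and phi is constant, hence
   orthogonal to the test vector.  As N is prime, k |-> k a1 mod N runs through all vertices; along this
   walk phi changes sign, and j steps later phi^2 <= 2 (j + 1) Q(phi) by
   Cauchy-Schwarz.  Hence the L = N/m vertices following the sign change have
   density about 1/m but carry mass O(a2^2 (L/N)^2) <= 1/(2m) for m = 2^16 a2^2. *)

Set Implicit Arguments. Unset Strict Implicit. Unset Printing Implicit Defensive.
Import Order.TTheory GRing.Theory Num.Theory.
Local Open Scope ring_scope.

Lemma modn_lt_double N x : (0 < N)%N -> (x < 2 * N)%N ->
  (x %% N = if x < N then x else x - N)%N.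
Proof.
move=> N0 x2N; case: ifP => xN; first by rewrite modn_small.
have -> : x = (x - N + N)%N by rewrite subnK //; lia.
by rewrite modnDr modn_small; lia.
Qed.

Section Shifts.
Variable n : nat.
Local Notation N := n.+1.

Definition shift (d : nat) (v : 'I_N) : 'I_N := Ordinal (ltn_pmod (v + d) (ltn0Sn n)).

Definition walk (a k : nat) : 'I_N := Ordinal (ltn_pmod (k * a) (ltn0Sn n)).

Lemma shift_inj d : injective (shift d).
Proof.
move=> u v /(congr1 val) /= /eqP; rewrite eqn_modDr => /eqP uv.
by apply/val_inj; rewrite /= -(modn_small (ltn_ord u)) -(modn_small (ltn_ord v)).
Qed.

Lemma sum_shift (R : nmodType) d (F : 'I_N -> R) : \sum_v F (shift d v) = \sum_v F v.
Proof. by rewrite [RHS](reindex_inj (@shift_inj d)). Qed.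

Lemma shiftK a v : (a <= N)%N -> shift (N - a) (shift a v) = v.
Proof.
move=> aN; apply/val_inj => /=; rewrite modnDml -addnA subnKC //.
by rewrite modnDr modn_small.
Qed.

Lemma walkS a k : walk a k.+1 = shift a (walk a k).
Proof. by apply/val_inj => /=; rewrite mulSn addnC modnDml. Qed.

Lemma walk_window_inj a k0 : prime N -> (0 < a < N)%N ->
  injective (fun t : 'I_N => walk a (k0 + t)).
Proof.
move=> pN /andP[a0 aN].
have cop : coprime N a by rewrite prime_coprime // gtnNdvd.
suff le_eq (t t' : 'I_N) : (t <= t')%N ->
    ((k0 + t) * a == (k0 + t') * a %[mod N]) -> t = t'.
  move=> t t' /(congr1 val) /= /eqP tt'.
  by case: (leqP t t') => [|/ltnW] le; [exact: le_eq | apply/esym/le_eq; rewrite // eq_sym].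
move=> le; rewrite !mulnDl eqn_modDl eq_sym eqn_mod_dvd ?leq_mul2r ?le ?orbT //.
rewrite -mulnBl Gauss_dvdl // => dv; apply/val_inj/eqP; rewrite eqn_leq le /=.
case: (posnP (t' - t)) => [/eqP|pos]; first by rewrite subn_eq0.
by have := dvdn_leq pos dv; have := ltn_ord t'; lia.
Qed.

Lemma sum_walk_window (R : nmodType) a k0 (F : 'I_N -> R) : prime N -> (0 < a < N)%N ->
  \sum_(t < N) F (walk a (k0 + t)) = \sum_v F v.
Proof. by move=> pN aN; rewrite [RHS](reindex_inj (@walk_window_inj a k0 pN aN)). Qed.

Lemma modn_diff_eq_shift (v w : 'I_N) e : (0 < e < N)%N ->
  (((v + N - w) %% N)%N == e) = (w == shift (N - e) v).
Proof.
move=> /andP[e0 eN]; have := ltn_ord v; have := ltn_ord w => wN vN.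
apply/eqP/eqP => [vw|->]; last first.
  by rewrite /= (@modn_lt_double N (v + (N - e))) ?modn_lt_double; try lia; do 2 case: ifP; lia.
apply/val_inj; move: vw => /=; rewrite !modn_lt_double; try lia.
by do 2 case: ifP; lia.
Qed.

Lemma shift_offset_inj (v : 'I_N) d d' : (d < N)%N -> (d' < N)%N ->
  shift d v = shift d' v -> d = d'.
Proof.
move=> dN d'N /(congr1 val) /=; have := ltn_ord v => vN.
by rewrite !modn_lt_double; try lia; do 2 case: ifP; lia.
Qed.

End Shifts.

Arguments walk_window_inj {n a} k0.

Section Circulant.
Variables (n a1 a2 : nat).
Local Notation N := n.+1.
Hypotheses (a1_gt0 : (0 < a1)%N) (a1_lt_a2 : (a1 < a2)%N) (a2_small : (2 * a2 < N)%N).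

Definition circ_nbrs (v : 'I_N) : seq 'I_N :=
  [seq shift d v | d <- [:: a1; N - a1; a2; N - a2]%N].

Lemma circ_adjbE v w : circ_adjb a1 a2 v w = (w \in circ_nbrs v).
Proof.
rewrite /circ_adjb !(modn_small (_ : a1 < N)%N) ?(modn_small (_ : a2 < N)%N); try lia.
rewrite !(modn_small (_ : N - a1 < N)%N) ?(modn_small (_ : N - a2 < N)%N); try lia.
rewrite !modn_diff_eq_shift; try lia.
by rewrite !subKn; try lia; rewrite !inE; do !bool_congr.
Qed.

Lemma uniq_circ_nbrs v : uniq (circ_nbrs v).
Proof.
rewrite map_inj_in_uniq => [|d d' dN d'N]; first by rewrite /= !inE; lia.
by apply: shift_offset_inj; move: dN d'N; rewrite !inE; lia.
Qed.

Lemma sum_circ_adj (R : nzRingType) (f : 'I_N -> R) v :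
  \sum_w circ_adj R N a1 a2 v w * f w =
  f (shift a1 v) + f (shift (N - a1) v) + f (shift a2 v) + f (shift (N - a2) v).
Proof.
under eq_bigr => w _ do rewrite mxE circ_adjbE (fun_if (fun x => x * f w)) mul1r mul0r.
rewrite -big_mkcond -big_uniq ?uniq_circ_nbrs //=.
by rewrite !big_cons big_nil addr0 !addrA.
Qed.

Definition dirichlet (R : nzRingType) (f : 'I_N -> R) : R :=
  \sum_v ((f (shift a1 v) - f v) ^+ 2 + (f (shift a2 v) - f v) ^+ 2).

Lemma sum_circ_adj_mul (R : comNzRingType) (f : 'I_N -> R) :
  \sum_v \sum_w circ_adj R N a1 a2 v w * f w = 4 * \sum_v f v.
Proof.
under eq_bigr => v _ do rewrite sum_circ_adj.
rewrite !big_split /= !sum_shift; ring.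
Qed.

Lemma circ_adj_quadform (R : comNzRingType) (f : 'I_N -> R) :
  \sum_v f v * \sum_w circ_adj R N a1 a2 v w * f w = 4 * \sum_v f v ^+ 2 - dirichlet f.
Proof.
have sum_back a : (a <= N)%N ->
    \sum_v f v * f (shift (N - a) v) = \sum_v f v * f (shift a v).
  move=> aN; rewrite -(sum_shift a (fun v => f v * f (shift (N - a) v))) /=.
  by apply: eq_bigr => v _; rewrite shiftK // mulrC.
have sum_sqr_shift a : \sum_v f (shift a v) ^+ 2 = \sum_v f v ^+ 2.
  exact: (sum_shift a (fun v => f v ^+ 2)).
under eq_bigr => v _ do rewrite sum_circ_adj !mulrDr.
rewrite !big_split /= !sum_back; try lia.
rewrite /dirichlet [X in _ - X](eq_bigr (fun v => f (shift a1 v) ^+ 2 + f (shift a2 v) ^+ 2 +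
  2 * f v ^+ 2 - 2 * (f v * f (shift a1 v)) - 2 * (f v * f (shift a2 v)))); last first.
  by move=> v _; ring.
by rewrite !sumrB !big_split /= -!mulr_sumr !sum_sqr_shift; ring.
Qed.

Lemma dirichlet_eq0_const (R : realDomainType) (f : 'I_N -> R) : prime N ->
  dirichlet f = 0 -> forall v, f v = f ord0.
Proof.
move=> pN /eqP; rewrite psumr_eq0 => [/allP f_flat|v _]; last by rewrite addr_ge0 ?sqr_ge0.
have f_shift v : f (shift a1 v) = f v.
  have /implyP/(_ isT) := f_flat v (mem_index_enum v).
  by rewrite paddr_eq0 ?sqr_ge0 // sqrf_eq0 subr_eq0 => /andP[/eqP].
have f_walk k : f (walk n a1 k) = f ord0.
  by elim: k => [|k IHk]; [congr f; apply/val_inj | rewrite walkS f_shift].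
have a1N : (0 < a1 < N)%N by lia.
have [g _ gK] := injF_bij (walk_window_inj 0 pN a1N).
by move=> v; rewrite -(gK v) f_walk.
Qed.

End Circulant.

Definition cdist (N u : nat) : nat := minn (u %% N) (N - u %% N).

Lemma cdist_modn N u : cdist N (u %% N) = cdist N u.
Proof. by rewrite /cdist modn_mod. Qed.

Lemma cdistS_le N u : (0 < N)%N ->
  (cdist N u.+1 <= cdist N u + 1)%N /\ (cdist N u <= cdist N u.+1 + 1)%N.
Proof.
move=> N0; rewrite /cdist -addn1 -modnDml.
have := ltn_pmod u N0; move: (u %% N)%N => k kN.
by rewrite modn_lt_double; [case: ifP|..]; lia.
Qed.

Lemma cdistD_le N u d : (0 < N)%N ->
  (cdist N (u + d) <= cdist N u + d)%N /\ (cdist N u <= cdist N (u + d) + d)%N.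
Proof.
move=> N0; elim: d => [|d IHd]; first by rewrite !addn0.
by rewrite addnS; have := cdistS_le (u + d) N0; lia.
Qed.

Lemma cdist_lipschitz (R : realDomainType) N u d : (0 < N)%N ->
  `|(cdist N (u + d))%:R - (cdist N u)%:R| <= d%:R :> R.
Proof.
move=> /(cdistD_le u d) [le1 le2].
by rewrite ler_distl lerBlDr -!natrD !ler_nat le1 le2.
Qed.

Section Tent.
Variables (R : realFieldType) (n : nat).
Local Notation N := n.+1.

Definition tent (v : 'I_N) : R := (cdist N v)%:R - (cdist N (v + N %/ 2))%:R.

Lemma sum_tent : \sum_v tent v = 0.
Proof.
rewrite sumrB -(sum_shift (N %/ 2) (fun v : 'I_N => (cdist N v)%:R : R)) /=.
by apply/eqP; rewrite subr_eq0; apply/eqP/eq_bigr => v _; rewrite cdist_modn.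
Qed.

Lemma tent_shift_sqr_le d v : (tent (shift d v) - tent v) ^+ 2 <= 4 * (d ^ 2)%:R.
Proof.
set x : R := (cdist N (v + d))%:R - (cdist N v)%:R.
set y : R := (cdist N (v + N %/ 2 + d))%:R - (cdist N (v + N %/ 2))%:R.
have -> : tent (shift d v) - tent v = x - y.
  rewrite /tent /x /y /= cdist_modn.
  have -> : cdist N ((v + d) %% N + N %/ 2) = cdist N (v + N %/ 2 + d).
    by rewrite -cdist_modn modnDml cdist_modn addnAC.
  ring.
have : `|x - y| <= d%:R + d%:R.
  by apply: le_trans (ler_normB x y) _; apply: lerD; apply: cdist_lipschitz.
rewrite -real_normK ?num_real // natrX => le2d.
have -> : 4 * d%:R ^+ 2 = (d%:R + d%:R) ^+ 2 :> R by ring.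
by rewrite ler_sqr ?nnegrE ?addr_ge0.
Qed.

Lemma cdist_antipode_ge v : (4 * v <= N %/ 2)%N ->
  (N %/ 2 + 2 * cdist N v <= 2 * cdist N (v + N %/ 2))%N.
Proof.
have := divn_eq N 2; have := ltn_pmod N (isT : (0 < 2)%N).
move: (N %/ 2)%N (N %% 2)%N => h r r2 Nhr hv.
by rewrite /cdist !modn_small; lia.
Qed.

Lemma sum_tent_sqr_ge : (1 <= n)%N -> N%:R ^+ 3 / 1024 <= \sum_v tent v ^+ 2.
Proof.
move=> n1; set h := (N %/ 2)%N; set q := (h %/ 4).+1.
have := divn_eq N 2; have := ltn_pmod N (isT : (0 < 2)%N); have := divn_eq h 4.
rewrite -/h => h4 r2 N2.
have qN : (q <= N)%N by lia.
have tent_ge (v : 'I_N) : (v < q)%N -> (h%:R / 2) ^+ 2 <= tent v ^+ 2.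
  move=> vq; have /cdist_antipode_ge : (4 * v <= h)%N by lia.
  rewrite -/h -(ler_nat R) natrD !natrM /tent -/h.
  move: (cdist N v)%:R (cdist N (v + h))%:R => x y hxy.
  have h0 : 0 <= h%:R :> R by [].
  have : h%:R / 2 <= y - x by lra.
  nra.
apply: le_trans (_ : \sum_(v < N | (v < q)%N) tent v ^+ 2 <= _); last first.
  rewrite [X in _ <= X](bigID (fun v : 'I_N => (v < q)%N)) /= lerDl.
  by apply: sumr_ge0 => v _; apply: sqr_ge0.
apply: le_trans (_ : \sum_(v < N | (v < q)%N) (h%:R / 2) ^+ 2 <= _); last first.
  by apply: ler_sum => v; apply: tent_ge.
rewrite -(big_ord_widen N (fun=> (h%:R / 2) ^+ 2)) // sumr_const card_ord -[_ *+ q]mulr_natr.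
have : N%:R <= 4 * h%:R :> R by rewrite -natrM ler_nat; lia.
have : N%:R <= 16 * q%:R :> R by rewrite -natrM ler_nat; lia.
have : 0 <= N%:R :> R by [].
move: N%:R h%:R q%:R => x y z x0 le_x16z le_x4y.
have -> : x ^+ 3 / 1024 = (x / 8) ^+ 2 * (x / 16) by field.
apply: ler_pM; rewrite ?sqr_ge0 //; try lra.
by rewrite ler_sqr ?nnegrE; lra.
Qed.

Lemma dirichlet_tent_le a1 a2 : (a1 <= a2)%N -> dirichlet a1 a2 tent <= 8 * (a2 ^ 2)%:R * N%:R.
Proof.
move=> a12; apply: le_trans (_ : \sum_(v < N) (4 * (a1 ^ 2)%:R + 4 * (a2 ^ 2)%:R) <= _).
  by apply: ler_sum => v _; apply: lerD; apply: tent_shift_sqr_le.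
rewrite sumr_const card_ord -[_ *+ N]mulr_natr.
have : (a1 ^ 2)%:R <= (a2 ^ 2)%:R :> R by rewrite ler_nat leq_exp2r.
have : 0 <= N%:R :> R by [].
nra.
Qed.

End Tent.

Section SignChangeWalk.
Variable R : realFieldType.

Lemma exists_sign_change (w : nat -> R) N : (0 < N)%N -> \sum_(t < N) w t = 0 ->
  exists2 k, (k < N)%N & w k * w k.+1 <= 0.
Proof.
move=> N0 sum0; case: (boolP [exists k : 'I_N, w k * w k.+1 <= 0]) => [/existsP[k]|].
  by exists k.
move=> /existsPn no_change; exfalso.
have same_sign k : (k < N)%N -> 0 < w k * w 0.
  elim: k => [|k IHk] kN.
    have := no_change (Ordinal kN); rewrite -ltNge /= => w01.
    by rewrite -expr2 exprn_even_gt0 //; apply: contraTneq w01 => ->; rewrite mul0r ltxx.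
  have := no_change (Ordinal (ltnW kN)); rewrite -ltNge /= => wk.
  have := mulr_gt0 (IHk (ltnW kN)) wk.
  rewrite mulrACA -expr2 pmulr_rgt0 //; last first.
    by rewrite exprn_even_gt0 //; apply: contraTneq wk => ->; rewrite mul0r ltxx.
  by rewrite mulrC.
have : 0 < \sum_(t < N) w t * w 0.
  clear no_change sum0; case: N N0 same_sign => // N _ same_sign.
  rewrite big_ord_recl; apply: (ltr_pwDl (same_sign 0%N isT)).
  by apply: sumr_ge0 => t _; apply/ltW/same_sign/ltn_ord.
by rewrite -mulr_suml sum0 mul0r ltxx.
Qed.

Lemma sqrD_le_mulD (J x d Q : R) : 0 < J -> x ^+ 2 <= J * Q ->
  (x + d) ^+ 2 <= (J + 1) * (Q + d ^+ 2).
Proof.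
move=> J0 xJQ; rewrite -subr_ge0 -(pmulr_rge0 _ J0).
have -> : J * ((J + 1) * (Q + d ^+ 2) - (x + d) ^+ 2) =
  (J + 1) * (J * Q - x ^+ 2) + (x - J * d) ^+ 2 by ring.
by rewrite addr_ge0 ?sqr_ge0 // mulr_ge0 ?subr_ge0 //; lra.
Qed.

Lemma sqr_le_after_sign_change (w : nat -> R) k0 : w k0 * w k0.+1 <= 0 -> forall j,
  w (k0 + j)%N ^+ 2 <= j.+1%:R * ((w k0.+1 - w k0) ^+ 2 +
     \sum_(t < j) (w (k0 + t).+1 - w (k0 + t)%N) ^+ 2).
Proof.
move=> change; elim=> [|j IHj].
  by rewrite addn0 big_ord0 addr0 mul1r; nra.
rewrite big_ord_recr /= addrA -[j.+2]addn1 natrD.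
have -> : w (k0 + j.+1)%N = w (k0 + j)%N + (w (k0 + j).+1 - w (k0 + j)%N) by rewrite addnS; ring.
exact: sqrD_le_mulD.
Qed.

End SignChangeWalk.

Lemma exists_window_sqr_le (R : realFieldType) n a (f : 'I_n.+1 -> R) L :
  prime n.+1 -> (0 < a < n.+1)%N -> (L <= n.+1)%N -> \sum_v f v = 0 ->
  exists S : {set 'I_n.+1}, #|S| = L /\
    \sum_(v in S) f v ^+ 2 <= 2 * L%:R ^+ 2 * \sum_v (f (shift a v) - f v) ^+ 2.
Proof.
move=> pN aN LN sum0.
pose w k := f (walk n a k); pose d k := (w k.+1 - w k) ^+ 2.
set E := \sum_v _.
have [k0 _ change] : exists2 k0, (k0 < n.+1)%N & w k0 * w k0.+1 <= 0.
  apply: exists_sign_change => //; rewrite -(sum_walk_window 0 f pN aN) in sum0.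
  by apply: etrans sum0; apply: eq_bigr => t _; rewrite add0n.
have sum_d : \sum_(t < n.+1) d (k0 + t)%N = E.
  rewrite /E -(sum_walk_window k0 (fun v => (f (shift a v) - f v) ^+ 2) pN aN).
  by apply: eq_bigr => t _; rewrite /d /w walkS.
have d_le j : (j <= n.+1)%N -> \sum_(t < j) d (k0 + t)%N <= E.
  move=> jN; rewrite -sum_d (big_ord_widen n.+1 (fun t => d (k0 + t)%N) jN).
  rewrite [X in _ <= X](bigID (fun t : 'I_n.+1 => (t < j)%N)) /= lerDl.
  by apply: sumr_ge0 => t _; apply: sqr_ge0.
have w_le j : (j < n.+1)%N -> w (k0 + j)%N ^+ 2 <= j.+1%:R * (2 * E).
  move=> jN; apply: le_trans (sqr_le_after_sign_change change j) _.
  rewrite ler_wpM2l // mulr2n mulrDl mul1r lerD //; last by rewrite d_le // ltnW.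
  by have := d_le 1%N isT; rewrite big_ord1 addn0.
pose g (j : 'I_L) := walk n a (k0 + widen_ord LN j).
have g_inj : injective g.
  by move=> j j' /(walk_window_inj k0 pN aN) /(congr1 val) /= /val_inj.
exists (g @: setT); split; first by rewrite card_imset // cardsT card_ord.
rewrite big_imset /=; last by move=> j j' _ _ /g_inj.
apply: le_trans (_ : \sum_(j in [set: 'I_L]) L%:R * (2 * E) <= _).
  apply: ler_sum => j _; apply: le_trans (w_le j (leq_trans (ltn_ord j) LN)) _.
  by rewrite ler_wpM2r ?mulr_ge0 ?sumr_ge0 // => [v _|]; rewrite ?sqr_ge0 ?ler_nat.
by rewrite sumr_const cardsT card_ord -mulr_natl; lra.
Qed.

Lemma exists_weighted_lt (R : realDomainType) (I : finType) (c x : I -> R) t :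
  (forall i, 0 <= c i) -> \sum_i c i * x i < t * \sum_i c i ->
  exists i, c i != 0 /\ x i < t.
Proof.
move=> c_ge0; case: (boolP [exists i, (c i != 0) && (x i < t)]).
  by move=> /existsP[i /andP[ci0 xit]]; exists i.
move=> /existsPn no_i; rewrite ltNge mulr_sumr => /negP[].
apply: ler_sum => i _; rewrite mulrC; have := no_i i.
case: (eqVneq (c i) 0) => [->|_ /= ]; first by rewrite !mul0r.
by rewrite -leNgt => /(ler_wpM2l (c_ge0 i)).
Qed.

Section Coordinates.
Variables (R : comUnitRingType) (N : nat) (B : 'M[R]_N) (X : 'cV[R]_N).
Hypothesis B_orth : B^T *m B = 1%:M.

Lemma sum_sqr_coords : \sum_v X v ord0 ^+ 2 = \sum_i (B^T *m X) i ord0 ^+ 2.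
Proof.
set c := B^T *m X.
have XE : X = B *m c by rewrite mulmxA (mulmx1C B_orth) mul1mx.
have : X^T *m X = c^T *m c.
  by rewrite {1 2}XE trmx_mul -mulmxA (mulmxA B^T) B_orth mul1mx.
move=> /(congr1 (fun Y : 'M[R]_1 => Y ord0 ord0)) XX.
transitivity ((X^T *m X) ord0 ord0).
  by rewrite mxE; apply: eq_bigr => v _; rewrite mxE expr2.
by rewrite XX mxE; apply: eq_bigr => i _; rewrite mxE expr2.
Qed.

Lemma quadform_coords (M : 'M[R]_N) (lam : 'rV[R]_N) : M *m B = B *m diag_mx lam ->
  \sum_v X v ord0 * (M *m X) v ord0 = \sum_i lam ord0 i * (B^T *m X) i ord0 ^+ 2.
Proof.
move=> MB; set c := B^T *m X.
have XE : X = B *m c by rewrite mulmxA (mulmx1C B_orth) mul1mx.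
have : X^T *m (M *m X) = c^T *m diag_mx lam *m c.
  by rewrite {1 2}XE trmx_mul (mulmxA M) MB -!mulmxA (mulmxA B^T) B_orth mul1mx.
move=> /(congr1 (fun Y : 'M[R]_1 => Y ord0 ord0)) XMX.
transitivity ((X^T *m (M *m X)) ord0 ord0).
  by rewrite [RHS]mxE; apply: eq_bigr => v _; rewrite [X^T _ _]mxE.
by rewrite XMX mxE; apply: eq_bigr => i _; rewrite mul_mx_diag !mxE expr2 mulrAC mulrC.
Qed.

End Coordinates.

Lemma eigenbasis_diag (R : comNzRingType) N (M B : 'M[R]_N) :
  (forall i, exists lam : R, M *m col i B = lam *: col i B) ->
  exists lam : 'rV[R]_N, M *m B = B *m diag_mx lam.
Proof.
move=> /fin_all_exists[l Ml]; exists (\row_i l i); apply/matrixP => v i.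
have := congr1 (fun Y : 'cV_N => Y v ord0) (Ml i).
rewrite mul_mx_diag !mxE mulrC => <-.
by apply: eq_bigr => w _; rewrite !mxE.
Qed.

Section LowEnergyEigenvector.
Variables (R : realType) (n a1 a2 : nat) (B : 'M[R]_n.+1) (lam : 'rV[R]_n.+1).
Local Notation N := n.+1.
Local Notation M := (circ_adj R N a1 a2).
Hypotheses (a1_gt0 : (0 < a1)%N) (a1_lt_a2 : (a1 < a2)%N) (a2_small : (2 * a2 < N)%N).
Hypotheses (pN : prime N) (B_orth : B^T *m B = 1%:M) (MB : M *m B = B *m diag_mx lam).

Local Notation X := (\col_v tent R v : 'cV[R]_N).

Lemma circ_adj_eigvec i v : \sum_w M v w * B w i = lam ord0 i * B v i.
Proof.
have := congr1 (fun Y : 'M_N => Y v i) MB.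
by rewrite mul_mx_diag !mxE mulrC => <-.
Qed.

Lemma sum_sqr_eigvec i : \sum_v B v i ^+ 2 = 1.
Proof.
transitivity ((B^T *m B) i i); last by rewrite B_orth mxE eqxx.
by rewrite [RHS]mxE; apply: eq_bigr => v _; rewrite mxE expr2.
Qed.

Lemma dirichlet_eigvec i : dirichlet a1 a2 (fun v => B v i) = 4 - lam ord0 i.
Proof.
have := circ_adj_quadform a1_gt0 a1_lt_a2 a2_small (fun v => B v i).
have -> : \sum_v B v i * \sum_w M v w * B w i = lam ord0 i.
  under eq_bigr do rewrite circ_adj_eigvec mulrCA -expr2.
  by rewrite -mulr_sumr sum_sqr_eigvec mulr1.
by rewrite sum_sqr_eigvec; lra.
Qed.

Lemma eigvec_sum_eq0 i : (B^T *m X) i ord0 != 0 -> \sum_v B v i = 0.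
Proof.
move=> coord_neq0; have := sum_circ_adj_mul a1_gt0 a1_lt_a2 a2_small (fun v => B v i).
under eq_bigr do rewrite circ_adj_eigvec; rewrite -mulr_sumr.
case: (eqVneq (lam ord0 i) 4) => [lam4 _|lam_neq4 /eqP]; last first.
  by rewrite -subr_eq0 -mulrBl mulf_eq0 subr_eq0 (negbTE lam_neq4) => /eqP.
have B_const : forall v, B v i = B ord0 i.
  apply: (dirichlet_eq0_const a1_gt0 a1_lt_a2 a2_small pN).
  by rewrite dirichlet_eigvec lam4 subrr.
move: coord_neq0; rewrite mxE.
under eq_bigr do rewrite !mxE B_const.
by rewrite -mulr_sumr sum_tent mulr0 eqxx.
Qed.

Lemma exists_low_energy_eigvec :
  exists i, (B^T *m X) i ord0 != 0 /\ (4 - lam ord0 i) * N%:R ^+ 2 < (2 ^ 14 * a2 ^ 2)%:R.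
Proof.
set K : R := (2 ^ 14 * a2 ^ 2)%:R; set c := fun i => (B^T *m X) i ord0 ^+ 2.
have N_gt0 : 0 < N%:R :> R by rewrite ltr0n.
have sum_c : \sum_i c i = \sum_(v : 'I_N) tent R v ^+ 2.
  by rewrite /c -(sum_sqr_coords X B_orth); apply: eq_bigr => v _; rewrite mxE.
have sum_c_energy : \sum_i c i * (4 - lam ord0 i) = dirichlet a1 a2 (@tent R n).
  have := circ_adj_quadform a1_gt0 a1_lt_a2 a2_small (@tent R n).
  have -> : \sum_(v : 'I_N) tent R v * \sum_w M v w * tent R w = \sum_i lam ord0 i * c i.
    rewrite -(quadform_coords X B_orth MB).
    apply: eq_bigr => v _.
    rewrite [X v _]mxE [(_ *m _) _ _]mxE; congr (_ * _).
    by apply: eq_bigr => w _; rewrite [X w _]mxE.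
  rewrite -sum_c => quad.
  transitivity (4 * \sum_i c i - \sum_i lam ord0 i * c i); last by rewrite quad; ring.
  by rewrite mulr_sumr -sumrB; apply: eq_bigr => i _; ring.
have [i [ci_neq0 lt_i]] : exists i, c i != 0 /\ 4 - lam ord0 i < K / N%:R ^+ 2.
  apply: exists_weighted_lt => [i|]; first exact: sqr_ge0.
  rewrite sum_c_energy sum_c; apply: le_lt_trans (dirichlet_tent_le R n (ltnW a1_lt_a2)) _.
  apply: lt_le_trans (_ : K / N%:R ^+ 2 * (N%:R ^+ 3 / 1024) <= _); last first.
    by rewrite ler_wpM2l ?divr_ge0 ?sqr_ge0 // sum_tent_sqr_ge //; lia.
  have -> : K / N%:R ^+ 2 * (N%:R ^+ 3 / 1024) = 16 * (a2 ^ 2)%:R * N%:R.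
    by rewrite /K natrM natrX; move: N%:R N_gt0 => x x_gt0; field; rewrite gt_eqF.
  have : 0 < (a2 ^ 2)%:R :> R by rewrite ltr0n expn_gt0; lia.
  nra.
by exists i; rewrite -ltr_pdivlMr ?exprn_gt0 // -sqrf_eq0.
Qed.

Lemma exists_localized_eigvec L : (L <= N)%N ->
  exists (S : {set 'I_N}) (i : 'I_N),
    #|S| = L /\ mu (col i B) S <= 2 * (2 ^ 14 * a2 ^ 2)%:R * (L%:R / N%:R) ^+ 2.
Proof.
move=> LN; have [i [coord_neq0 low_i]] := exists_low_energy_eigvec.
have a1N : (0 < a1 < N)%N by lia.
have [S [cardS window_le]] := exists_window_sqr_le pN a1N LN (eigvec_sum_eq0 coord_neq0).
exists S, i; split => //.
have -> : mu (col i B) S = \sum_(v in S) B v i ^+ 2.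
  by apply: eq_bigr => v _; rewrite mxE real_normK ?num_real.
apply: le_trans window_le _.
have E_le : \sum_v (B (shift a1 v) i - B v i) ^+ 2 <= 4 - lam ord0 i.
  by rewrite -dirichlet_eigvec; apply: ler_sum => v _; rewrite lerDl sqr_ge0.
have N_gt0 : 0 < N%:R :> R by rewrite ltr0n.
apply: le_trans (_ : 2 * L%:R ^+ 2 * ((2 ^ 14 * a2 ^ 2)%:R / N%:R ^+ 2) <= _).
  rewrite ler_wpM2l ?mulr_ge0 ?sqr_ge0 //; apply: (le_trans E_le).
  by rewrite ler_pdivlMr ?exprn_gt0 // ltW.
suff -> : forall K : R, 2 * L%:R ^+ 2 * (K / N%:R ^+ 2) = 2 * K * (L%:R / N%:R) ^+ 2 by [].
by move: N%:R N_gt0 => x x_gt0 K; field; rewrite gt_eqF.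
Qed.

End LowEnergyEigenvector.

Lemma exists_sparse_window_eigvec (R : realType) n a1 a2 (B : 'M[R]_n) m :
  (0 < a1)%N -> (a1 < a2)%N -> prime n -> (2 * a2 < n)%N ->
  orthonormal_eigenbasis (circ_adj R n a1 a2) B -> (4 * (2 ^ 14 * a2 ^ 2) <= m)%N ->
  exists SP : {set 'I_n} * 'cV[R]_n,
    [&& #|SP.1| == (n %/ m)%N, mu SP.2 SP.1 <= (2 * m%:R)^-1 & [exists i, SP.2 == col i B]].
Proof.
move=> a1_gt0 a12 pN a2_small [B_orth /eigenbasis_diag[lam MB]].
set K := (2 ^ 14 * a2 ^ 2)%N => Km.
have K_gt0 : (0 < K)%N by rewrite muln_gt0 !expn_gt0; lia.
case: n B lam pN a2_small B_orth MB => // n B lam pN a2_small B_orth MB.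
have [S [i [cardS mu_le]]] := exists_localized_eigvec a1_gt0 a12 a2_small pN B_orth MB
  (leq_div n.+1 m).
exists (S, col i B); rewrite /= cardS eqxx /=; apply/andP; split; last first.
  by apply/existsP; exists i.
apply: le_trans mu_le _.
have m_gt0 : 0 < m%:R :> R by rewrite ltr0n; lia.
have N_gt0 : 0 < n.+1%:R :> R by rewrite ltr0n.
have frac_le : (n.+1 %/ m)%:R / n.+1%:R <= m%:R^-1 :> R.
  by rewrite ler_pdivrMr // ler_pdivlMl // -natrM ler_nat mulnC leq_trunc_div.
apply: le_trans (_ : 2 * K%:R * m%:R^-1 ^+ 2 <= _).
  by rewrite ler_wpM2l ?mulr_ge0 // ler_sqr ?nnegrE ?invr_ge0 ?divr_ge0.
have : 4 * K%:R <= m%:R :> R by rewrite -natrM ler_nat.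
move: m%:R m_gt0 K%:R => x x_gt0 k le_4k_x.
have -> : 2 * k * x^-1 ^+ 2 = 4 * k / x * (2 * x)^-1 by field; rewrite gt_eqF.
by rewrite ler_piMl ?invr_ge0 ?mulr_ge0 ?(ltW x_gt0) // ler_pdivrMr // mul1r.
Qed.

Section ConvAlong.
Variables (R : realType) (A : pred nat).

Lemma eq_conv_along (x y : nat -> R) l :
  (forall n, A n -> x n = y n) -> conv_along A x l -> conv_along A y l.
Proof.
move=> xy conv_x eps eps_gt0; have [N HN] := conv_x eps eps_gt0.
by exists N => n An Nn; rewrite -xy // HN.
Qed.

Lemma dist_floor_div_lt m n : (0 < m)%N -> (0 < n)%N ->
  `|(n %/ m)%N%:R / n%:R - m%:R^-1| < n%:R^-1 :> R.
Proof.
move=> m_gt0 n_gt0.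
have : ((n %/ m) * m <= n < (n %/ m).+1 * m)%N by rewrite leq_trunc_div ltn_ceil.
rewrite -(ler_nat R) -(ltr_nat R) !natrM -addn1 natrD => /andP[lo hi].
have : 0 < n%:R :> R by rewrite ltr0n.
have : 0 < m%:R :> R by rewrite ltr0n.
move: (n %/ m)%N%:R n%:R m%:R lo hi => q x y lo hi y_gt0 x_gt0.
have -> : q / x - y^-1 = (q * y - x) / (x * y) by field; rewrite !gt_eqF.
have xy_gt0 : 0 < x * y by apply: mulr_gt0.
have -> : x^-1 = y / (x * y) by field; rewrite !gt_eqF.
by rewrite ltr_norml ltr_pdivlMr // ltr_pdivrMr // -mulNr !divfK ?gt_eqF //; lra.
Qed.

Lemma conv_along_floor_div m : (0 < m)%N ->
  conv_along A (fun n => ((n %/ m)%N%:R / n%:R : R)) m%:R^-1.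
Proof.
move=> m_gt0 eps eps_gt0.
have /archi_boundP : 0 <= eps^-1 by rewrite invr_ge0 ltW.
set N := Num.Def.archi_bound _ => inv_eps_lt.
exists N.+1 => n _ Nn; apply: lt_trans (dist_floor_div_lt m_gt0 (_ : 0 < n)%N) _; first lia.
rewrite -(invrK eps) ltf_pV2 ?posrE ?invr_gt0 ?ltr0n //; last lia.
by apply: lt_le_trans inv_eps_lt _; rewrite ler_nat; lia.
Qed.

Lemma not_conv_along_le (x : nat -> R) p q : infinite_nat A -> q < p ->
  (forall n, A n -> x n <= q) -> ~ conv_along A x p.
Proof.
move=> infA qp x_le conv_x; rewrite -subr_gt0 in qp.
have [N HN] := conv_x (p - q) qp.
have [n [Nn An]] := infA N; have := HN n An Nn.
by rewrite ltr_norml => /andP[+ _]; have := x_le n An; lra.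
Qed.

End ConvAlong.

Lemma choice_along (T : nat -> choiceType) (A : pred nat) (P : forall n, T n -> bool) :
  (forall n, T n) -> (forall n, A n -> exists x, P n x) ->
  exists f : forall n, T n, forall n, A n -> P n (f n).
Proof.
move=> x0 exP; have exP' n : exists x, A n ==> P n x.
  by case An: (A n); [have [x Px] := exP n An; exists x | exists (x0 n)].
by exists (fun n => xchoose (exP' n)) => n An; apply: (implyP (xchooseP (exP' n))).
Qed.

Theorem theorem2 (R : realType) (a1 a2 : nat) (A : pred nat)
  (B : forall n : nat, 'M[R]_n) :
  (1 <= a1)%N -> (a1 < a2)%N ->
  infinite_nat A ->
  (forall n, A n -> prime n /\ (2 * a2 < n)%N) ->
  (forall n, A n -> orthonormal_eigenbasis (circ_adj R n a1 a2) (B n)) ->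
  exists (p : R) (S : forall n : nat, {set 'I_n}) (phi : forall n : nat, 'cV[R]_n),
    [/\ 0 < p < 1,
        conv_along A (fun n => (#|S n|%:R / n%:R : R)) p,
        (forall n, A n -> exists i : 'I_n, phi n = col i (B n)) &
        ~ conv_along A (fun n => mu (phi n) (S n)) p].
Proof.
move=> a1_gt0 a12 infA A_prime A_eig; set m := (4 * (2 ^ 14 * a2 ^ 2))%N.
have m_gt1 : (1 < m)%N by rewrite /m; have := expn_gt0 a2 2; lia.
have good n : A n -> exists SP : {set 'I_n} * 'cV[R]_n,
    [&& #|SP.1| == (n %/ m)%N, mu SP.2 SP.1 <= (2 * m%:R)^-1 & [exists i, SP.2 == col i (B n)]].
  move=> An; have [pn a2_small] := A_prime n An.
  exact: exists_sparse_window_eigvec a1_gt0 a12 pn a2_small (A_eig n An) (leqnn m).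
have [SP SP_ok] := choice_along (fun n => (set0, 0)) good.
have m_gt0 : 0 < m%:R :> R by rewrite ltr0n; lia.
exists m%:R^-1, (fun n => (SP n).1), (fun n => (SP n).2); split.
- by rewrite invr_gt0 m_gt0 invf_lt1 // ltr1n.
- apply: eq_conv_along (conv_along_floor_div A (ltnW m_gt1)) => n An.
  by have /and3P[/eqP -> _ _] := SP_ok n An.
- by move=> n An; have /and3P[_ _ /existsP[i /eqP ->]] := SP_ok n An; exists i.
- apply: (not_conv_along_le infA (q := (2 * m%:R)^-1)) => [|n An].
    by rewrite ltf_pV2 ?posrE ?mulr_gt0 //; lra.
  by have /and3P[_ mu_le _] := SP_ok n An.
Qed.
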